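(* Let $0<a<1$ and let $\tau_1,\tau_2:[0,a]\to[0,1]$ be continuously differentiable, strictly increasing maps with $\tau_i(0)=0$, $\tau_i(a)=1$, $\tau_1(x)\le x/a$ and $\tau_2(x)\ge x/a$, such that $\tau_{21}=\tau_2^{-1}\circ\tau_1:[0,a]\to[0,a]$ is continuously differentiable and satisfies $\tau_{21}(x)<x$ for $x\in(0,a)$. Let $0<\widehat a<a$ and $\sigma<1$ be such that $\tau_{21}'(x)\le\sigma$ for $x\in[0,\widehat a]$, and let $p$ be the unique bounded solution on $[0,\widehat a]$ of $$p(x)=p(\tau_{21}(x))\,\tau_{21}'(x)-\left[\tau_{21}'(x)-a\,\tau_1'(x)\right].\qquad(\ast)$$ Then $p$ extends uniquely to a function on $[0,a)$ satisfying $(\ast)$ for all $x\in[0,a)$, and this extension is given for every $x\in[0,a)$ by the convergent series $$p(x)=\sum_{n=0}^\infty B(\tau_{21}^n(x))\,(\tau_{21}^n)'(x),\qquad B(x)=a\,\tau_1'(x)-\tau_{21}'(x).$$ In particular, the resulting function on $[0,a)$ does not depend on the choice of $\widehat a$. *)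

From Stdlib Require Import Reals.
From Coquelicot Require Import Coquelicot.
Open Scope R_scope.

Fixpoint iterf (n : nat) (f : R -> R) (x : R) : R :=
  match n with
  | O => x
  | S k => f (iterf k f x)
  end.

Definition has_derivative_on (f f' : R -> R) (lo hi : R) : Prop :=
  forall x, lo <= x <= hi ->
    filterlim (fun y => (f y - f x) / (y - x))
      (within (fun y => lo <= y <= hi /\ y <> x) (locally x))
      (locally (f' x)).

Definition continuous_on_interval (g : R -> R) (lo hi : R) : Prop :=
  forall x, lo <= x <= hi ->
    filterlim g (within (fun y => lo <= y <= hi) (locally x)) (locally (g x)).

Definition C1_on (f f' : R -> R) (lo hi : R) : Prop :=
  has_derivative_on f f' lo hi /\ continuous_on_interval f' lo hi.

Definition strictly_increasing_on (f : R -> R) (lo hi : R) : Prop :=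
  forall x y, lo <= x <= hi -> lo <= y <= hi -> x < y -> f x < f y.

From Stdlib Require Import Reals Lra Classical.
From Coquelicot Require Import Coquelicot.
Open Scope R_scope.

(* Unwinding the functional equation n times writes p x as the n-th partial sum of the
   series plus the remainder (t21^(n+1))'(x) p(t21^(n+1) x).  On [0, ahat] the chain rule
   bounds that derivative by sigma^(n+1), so the remainder vanishes and the series sums
   to p.  For x < a the orbit of t21 decreases and could only accumulate at a fixed point
   of t21 in (0, a), which does not exist; hence it enters [0, ahat] after finitely many
   steps, and unwinding the equation along those steps both extends p uniquely and
   gives convergence of the series at x. *)

Lemma iterf_S (n : nat) (f : R -> R) (x : R) : iterf (S n) f x = iterf n f (f x).
Proof. induction n as [|n IH]; simpl; [reflexivity|]. now rewrite <- IH. Qed.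

Lemma strictly_increasing_on_inj (f : R -> R) (lo hi : R) :
  strictly_increasing_on f lo hi ->
  forall x y, lo <= x <= hi -> lo <= y <= hi -> f x = f y -> x = y.
Proof.
  intros Hf x y Hx Hy E.
  destruct (Rtotal_order x y) as [L|[L|L]]; auto.
  - specialize (Hf x y Hx Hy L). lra.
  - specialize (Hf y x Hy Hx L). lra.
Qed.

Lemma strictly_increasing_on_of_comp (f g h : R -> R) (lo hi : R) :
  strictly_increasing_on g lo hi -> strictly_increasing_on h lo hi ->
  (forall x, lo <= x <= hi -> lo <= f x <= hi) ->
  (forall x, lo <= x <= hi -> h (f x) = g x) ->
  strictly_increasing_on f lo hi.
Proof.
  intros Hg Hh Hf Hhf x y Hx Hy Hxy. apply Rnot_le_lt. intros Hyx.
  pose proof (Hg x y Hx Hy Hxy) as Hgxy. rewrite <- (Hhf x Hx), <- (Hhf y Hy) in Hgxy.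
  destruct (Rle_lt_or_eq_dec _ _ Hyx) as [Hlt|Heq].
  - pose proof (Hh _ _ (Hf y Hy) (Hf x Hx) Hlt). lra.
  - rewrite Heq in Hgxy. lra.
Qed.

Section IntervalDerivative.

Variables lo hi : R.
Hypothesis lo_lt_hi : lo < hi.

Local Notation punctured x := (within (fun y => lo <= y <= hi /\ y <> x) (locally x)).

Lemma punctured_interval_proper (x : R) :
  lo <= x <= hi -> ProperFilter' (punctured x).
Proof.
  intros Hx. split; [|apply within_filter, locally_filter].
  intros [e He].
  set (h := Rmin (e / 2) (Rmax (hi - x) (x - lo))).
  assert (Hh : 0 < h /\ h < e).
  { unfold h. pose proof (cond_pos e). pose proof (Rmin_l (e / 2) (Rmax (hi - x) (x - lo))).
    split; [apply Rmin_glb_lt; [lra|]|lra].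
    apply Rmax_case_strong; intros; lra. }
  destruct (Rle_or_lt (x - lo) (hi - x)) as [Hc|Hc].
  - apply (He (x + h)).
    + change (Rabs (x + h - x) < e). rewrite Rabs_right; lra.
    + unfold h in *. rewrite Rmax_left in * by lra. pose proof (Rmin_r (e / 2) (hi - x)). lra.
  - apply (He (x - h)).
    + change (Rabs (x - h - x) < e). rewrite Rabs_left; lra.
    + unfold h in *. rewrite Rmax_right in * by lra. pose proof (Rmin_r (e / 2) (x - lo)). lra.
Qed.

Lemma has_derivative_on_unique (f f1 f2 : R -> R) (x : R) :
  has_derivative_on f f1 lo hi -> has_derivative_on f f2 lo hi ->
  lo <= x <= hi -> f1 x = f2 x.
Proof.
  intros H1 H2 Hx.
  exact (filterlim_locally_unique (FF := punctured_interval_proper x Hx) _ _ _ (H1 x Hx) (H2 x Hx)).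
Qed.

Lemma has_derivative_on_nonneg (f f' : R -> R) (x : R) :
  strictly_increasing_on f lo hi -> has_derivative_on f f' lo hi ->
  lo <= x <= hi -> 0 <= f' x.
Proof.
  intros Hf Hd Hx.
  apply (filterlim_le (FF := punctured_interval_proper x Hx) (fun _ => 0)
           (fun y => (f y - f x) / (y - x)) 0 (f' x)); [|apply filterlim_const|exact (Hd x Hx)].
  exists (mkposreal 1 Rlt_0_1). intros y _ [Hy Hyx].
  destruct (Rtotal_order x y) as [L|[L|L]]; [| congruence |].
  - apply Rlt_le, Rdiv_lt_0_compat; [specialize (Hf x y Hx Hy L)|]; lra.
  - replace ((f y - f x) / (y - x)) with ((f x - f y) / (x - y)) by (field; lra).
    apply Rlt_le, Rdiv_lt_0_compat; [specialize (Hf y x Hy Hx L)|]; lra.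
Qed.

Lemma has_derivative_on_continuous (f f' : R -> R) (x : R) :
  has_derivative_on f f' lo hi -> lo <= x <= hi ->
  filterlim f (punctured x) (locally (f x)).
Proof.
  intros Hd Hx.
  assert (Hid : filterlim (fun y => y) (punctured x) (locally x)).
  { intros P HP. exact (filter_imp P _ (fun y Py _ => Py) HP). }
  assert (Hshift : filterlim (fun y => y + - x) (punctured x) (locally (x + - x))).
  { exact (filterlim_comp_2 _ _ Rplus Hid (filterlim_const (- x))
             (filterlim_Rbar_plus x (- x) (x + - x) eq_refl)). }
  assert (Hlin : filterlim (fun y => f x + (f y - f x) / (y - x) * (y + - x))
                   (punctured x) (locally (f x + f' x * (x + - x)))).
  { apply (filterlim_comp_2 (H := locally (f' x * (x + - x))) _ _ Rplus (filterlim_const (f x))).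
    - exact (filterlim_comp_2 _ _ Rmult (Hd x Hx) Hshift
               (filterlim_Rbar_mult (f' x) (x + - x) _ eq_refl)).
    - exact (filterlim_Rbar_plus (f x) (f' x * (x + - x)) _ eq_refl). }
  replace (f x + f' x * (x + - x)) with (f x) in Hlin by ring.
  eapply filterlim_ext_loc; [|exact Hlin].
  exists (mkposreal 1 Rlt_0_1). intros y _ [_ Hyx]. field. lra.
Qed.

Lemma has_derivative_on_comp (g g' f f' : R -> R) :
  has_derivative_on g g' lo hi -> has_derivative_on f f' lo hi ->
  (forall x, lo <= x <= hi -> lo <= f x <= hi) ->
  (forall x y, lo <= x <= hi -> lo <= y <= hi -> f x = f y -> x = y) ->
  has_derivative_on (fun x => g (f x)) (fun x => g' (f x) * f' x) lo hi.
Proof.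
  intros Hg Hf Hmap Hinj x Hx.
  assert (Himg : punctured x (fun y => lo <= f y <= hi /\ f y <> f x)).
  { exists (mkposreal 1 Rlt_0_1). intros y _ [Hy Hyx].
    split; [apply Hmap, Hy|]. intros E. apply Hyx, Hinj; auto. }
  assert (Hfl : filterlim f (punctured x) (punctured (f x))).
  { intros P HP.
    assert (Hc : punctured x (fun y => lo <= f y <= hi /\ f y <> f x -> P (f y)))
      by exact (has_derivative_on_continuous f f' x Hf Hx _ HP).
    generalize (filter_and _ _ Hc Himg).
    unfold filtermap. apply filter_imp. intros y [HPy Hy]. exact (HPy Hy). }
  assert (Hquot := filterlim_comp _ _ _ f (fun z => (g z - g (f x)) / (z - f x)) _ _ _
                     Hfl (Hg (f x) (Hmap x Hx))).
  eapply filterlim_ext_loc;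
    [|exact (filterlim_comp_2 _ _ Rmult Hquot (Hf x Hx)
                                   (filterlim_Rbar_mult (g' (f x)) (f' x) _ eq_refl))].
  generalize Himg. apply filter_imp. intros y [_ Hfy]. simpl.
  assert (y <> x) by (intros ->; contradiction).
  field. lra.
Qed.

Section Iterates.

Variables (f f' : R -> R) (D : nat -> R -> R).
Hypothesis f_maps : forall x, lo <= x <= hi -> lo <= f x <= hi.
Hypothesis f_inc : strictly_increasing_on f lo hi.
Hypothesis f_deriv : has_derivative_on f f' lo hi.
Hypothesis D_deriv : forall n, has_derivative_on (iterf n f) (D n) lo hi.

Lemma iterf_maps (n : nat) (x : R) : lo <= x <= hi -> lo <= iterf n f x <= hi.
Proof. induction n; simpl; auto. Qed.

Lemma iter_derivative_0 (x : R) : lo <= x <= hi -> D 0 x = 1.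
Proof.
  intros Hx. apply (has_derivative_on_unique (iterf 0 f) _ (fun _ => 1) x (D_deriv 0)); [|exact Hx].
  intros y Hy. eapply filterlim_ext_loc; [|apply filterlim_const].
  exists (mkposreal 1 Rlt_0_1). intros z _ [_ Hzy]. simpl. field. lra.
Qed.

Lemma iter_derivative_S (n : nat) (x : R) :
  lo <= x <= hi -> D (S n) x = D n (f x) * f' x.
Proof.
  intros Hx. apply (has_derivative_on_unique (iterf (S n) f) _ (fun y => D n (f y) * f' y) x
                                   (D_deriv (S n))); [|exact Hx].
  intros y Hy. eapply filterlim_ext;
    [|exact (has_derivative_on_comp _ _ _ _ (D_deriv n) f_deriv f_maps
               (strictly_increasing_on_inj f lo hi f_inc) y Hy)].
  intros z. simpl. now rewrite <- !iterf_S.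
Qed.

End Iterates.

End IntervalDerivative.

Lemma iterf_eventually_le (f : R -> R) (lo hi c x : R) :
  lo <= c -> x <= hi ->
  (forall y, c <= y <= x -> f y < y) ->
  (forall y, c <= y <= x ->
     filterlim f (within (fun z => lo <= z <= hi /\ z <> y) (locally y)) (locally (f y))) ->
  exists N, iterf N f x <= c.
Proof.
  intros Hlo Hhi Hdecr Hcont.
  apply NNPP. intros Hnot.
  set (u n := iterf n f x).
  assert (Habove : forall n, c < u n).
  { intros n. apply Rnot_le_lt. intros Hn. apply Hnot. exists n. exact Hn. }
  assert (Hin : forall n, c < u n <= x).
  { induction n as [|n IH]; [split; [apply Habove|apply Rle_refl]|].
    split; [apply Habove|]. pose proof (Hdecr (u n) ltac:(lra)). change (f (u n) <= x). lra. }
  assert (Hstep : forall n, u (S n) < u n).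
  { intros n. apply Hdecr. pose proof (Hin n). lra. }
  destruct (ex_finite_lim_seq_decr u c (fun n => Rlt_le _ _ (Hstep n))
              (fun n => Rlt_le _ _ (Habove n))) as [L HL].
  assert (HLu : forall n, L < u n).
  { intros n. apply Rle_lt_trans with (u (S n)); [|apply Hstep].
    apply (is_lim_seq_decr_compare u L HL (fun n => Rlt_le _ _ (Hstep n))). }
  assert (HLc : c <= L).
  { apply (is_lim_seq_le (fun _ => c) u c L);
      [intros n; apply Rlt_le, Habove|apply is_lim_seq_const|exact HL]. }
  assert (HLx : L <= x) by exact (Rlt_le _ _ (HLu 0%nat)).
  assert (Hfu : is_lim_seq (fun n => f (u n)) (f L)).
  { apply (filterlim_comp _ _ _ u f _ (within (fun z => lo <= z <= hi /\ z <> L) (locally L)));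
      [|apply Hcont; lra].
    intros P HP. unfold filtermap.
    apply (filter_imp (fun n => (lo <= u n <= hi /\ u n <> L) -> P (u n))).
    - intros n Hn. apply Hn. pose proof (Hin n). pose proof (HLu n).
      split; [lra|]. apply Rgt_not_eq. lra.
    - exact (HL _ HP). }
  assert (Hfix : f L = L).
  { apply is_lim_seq_incr_1 in HL.
    assert (E := is_lim_seq_unique _ _ HL).
    change (Lim_seq (fun n => f (u n)) = L) in E.
    rewrite (is_lim_seq_unique _ _ Hfu) in E. now injection E. }
  pose proof (Hdecr L ltac:(lra)). lra.
Qed.

Section FunctionalEquation.

Variables (I : R -> Prop) (t t' B : R -> R) (D : nat -> R -> R).
Hypothesis I_stable : forall x, I x -> I (t x).
Hypothesis D_0 : forall x, I x -> D 0%nat x = 1.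
Hypothesis D_S : forall n x, I x -> D (S n) x = D n (t x) * t' x.

Definition solves_at (q : R -> R) (x : R) : Prop := q x = q (t x) * t' x + B x.

Definition series_term (x : R) (n : nat) : R := B (iterf n t x) * D n x.

Lemma D_S_iterf (n : nat) (x : R) : I x -> D (S n) x = t' (iterf n t x) * D n x.
Proof.
  revert x. induction n as [|n IH]; intros x Hx.
  - rewrite D_S, !D_0 by auto. simpl. ring.
  - rewrite D_S, IH, D_S, <- iterf_S by auto. simpl. ring.
Qed.

Lemma is_series_term_shift (x s : R) :
  I x -> is_series (series_term (t x)) s -> is_series (series_term x) (B x + t' x * s).
Proof.
  intros Hx Hs. apply is_series_decr_1.
  match goal with |- is_series _ ?v =>
    replace v with (scal (t' x) s)
      by (unfold series_term, plus, opp, scal; simpl; rewrite D_0 by exact Hx;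
          unfold mult; simpl; ring) end.
  eapply is_series_ext; [|exact (is_series_scal_l (t' x) _ _ Hs)].
  intros n. unfold series_term, scal; simpl; unfold mult; simpl.
  rewrite D_S, <- iterf_S by exact Hx. simpl. ring.
Qed.

Lemma ex_series_term_iterf (N : nat) (x : R) :
  I x -> ex_series (series_term (iterf N t x)) -> ex_series (series_term x).
Proof.
  revert x. induction N as [|N IH]; intros x Hx Hex; [exact Hex|].
  rewrite iterf_S in Hex. destruct (IH (t x) (I_stable x Hx) Hex) as [s Hs].
  exists (B x + t' x * s). apply is_series_term_shift; assumption.
Qed.

Lemma Series_term_solves (x : R) :
  I x -> ex_series (series_term (t x)) -> solves_at (fun y => Series (series_term y)) x.
Proof.
  intros Hx [s Hs]. unfold solves_at.
  rewrite (is_series_unique _ _ (is_series_term_shift x s Hx Hs)), (is_series_unique _ _ Hs).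
  ring.
Qed.

Lemma solution_partial_sum (q : R -> R) (x : R) (n : nat) :
  I x -> (forall k, solves_at q (iterf k t x)) ->
  q x = sum_n (series_term x) n + D (S n) x * q (iterf (S n) t x).
Proof.
  intros Hx Hq. induction n as [|n IH].
  - rewrite sum_O. unfold series_term. rewrite D_S_iterf, D_0 by exact Hx.
    specialize (Hq 0%nat). unfold solves_at in Hq. simpl in *. lra.
  - rewrite sum_Sn, IH. specialize (Hq (S n)). unfold solves_at in Hq.
    unfold series_term, plus. simpl. rewrite (D_S_iterf (S n)) by exact Hx.
    simpl in *. rewrite Hq. ring.
Qed.

Lemma is_series_term_bounded_solution (q : R -> R) (x sigma M : R) :
  I x -> sigma < 1 -> (forall k, solves_at q (iterf k t x)) ->
  (forall k, Rabs (q (iterf k t x)) <= M) -> (forall n, Rabs (D n x) <= sigma ^ n) ->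
  is_series (series_term x) (q x).
Proof.
  intros Hx Hsig Hq HM HD.
  assert (Hsig0 : 0 <= sigma).
  (* forced by the bound at n = 1 *)
  { pose proof (HD 1%nat). pose proof (Rabs_pos (D 1%nat x)). simpl in *. lra. }
  set (r n := D (S n) x * q (iterf (S n) t x)).
  assert (Hr : is_lim_seq r 0).
  { apply is_lim_seq_abs_0, (is_lim_seq_le_le (fun _ => 0) _ (fun n => M * sigma ^ (S n))).
    - intros n. split; [apply Rabs_pos|]. unfold r. rewrite Rabs_mult, Rmult_comm.
      apply Rmult_le_compat; [apply Rabs_pos|apply Rabs_pos|apply HM|apply HD].
    - apply is_lim_seq_const.
    - replace (Finite 0) with (Rbar_mult M 0) by (simpl; f_equal; ring).
      apply is_lim_seq_scal_l, (is_lim_seq_incr_1 (fun n => sigma ^ n)), is_lim_seq_geom.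
      rewrite Rabs_pos_eq; lra. }
  change (is_lim_seq (sum_n (series_term x)) (q x)).
  apply is_lim_seq_ext with (fun n => q x - r n).
  { intros n. unfold r. rewrite (solution_partial_sum q x n Hx Hq) at 1. ring. }
  replace (Finite (q x)) with (Finite (q x - 0)) by (f_equal; ring).
  apply is_lim_seq_minus'; [apply is_lim_seq_const|exact Hr].
Qed.

Lemma D_geometric_bound (J : R -> Prop) (sigma : R) :
  (forall x, J x -> I x) -> (forall x, J x -> J (t x)) ->
  (forall x, J x -> Rabs (t' x) <= sigma) ->
  forall n x, J x -> Rabs (D n x) <= sigma ^ n.
Proof.
  intros HJI HJ Ht' n. induction n as [|n IH]; intros x Hx.
  - rewrite D_0 by auto. simpl. rewrite Rabs_R1. lra.
  - rewrite D_S, Rabs_mult, Rmult_comm by auto. simpl.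
    apply Rmult_le_compat; auto using Rabs_pos.
Qed.

Lemma solutions_agree_iterf (q1 q2 : R -> R) (N : nat) (x : R) :
  (forall y, I y -> solves_at q1 y) -> (forall y, I y -> solves_at q2 y) ->
  I x -> q1 (iterf N t x) = q2 (iterf N t x) -> q1 x = q2 x.
Proof.
  intros H1 H2. revert x. induction N as [|N IH]; intros x Hx E; [exact E|].
  rewrite iterf_S in E. rewrite (H1 x Hx), (H2 x Hx), (IH (t x) (I_stable x Hx) E).
  reflexivity.
Qed.

Theorem bounded_solution_extends (J : R -> Prop) (sigma M : R) (p : R -> R) :
  (forall x, J x -> I x) -> (forall x, J x -> J (t x)) ->
  sigma < 1 -> (forall x, J x -> Rabs (t' x) <= sigma) ->
  (forall x, J x -> Rabs (p x) <= M) -> (forall x, J x -> solves_at p x) ->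
  (forall x, I x -> exists N, J (iterf N t x)) ->
  exists q : R -> R,
    (forall x, J x -> q x = p x) /\
    (forall x, I x -> solves_at q x) /\
    (forall q' : R -> R, (forall x, J x -> q' x = p x) -> (forall x, I x -> solves_at q' x) ->
       forall x, I x -> q' x = q x) /\
    (forall x, I x -> is_series (series_term x) (q x)).
Proof.
  intros HJI HJ Hsig Ht' HM Hp Henter.
  assert (HJit : forall k x, J x -> J (iterf k t x)) by (induction k; simpl; auto).
  assert (Hp_series : forall x, J x -> is_series (series_term x) (p x)).
  { intros x Hx. apply (is_series_term_bounded_solution p x sigma M); auto.
    intros n. exact (D_geometric_bound J sigma HJI HJ Ht' n x Hx). }
  assert (Hcv : forall x, I x -> is_series (series_term x) (Series (series_term x))).
  { intros x Hx. destruct (Henter x Hx) as [N HN].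
    apply Series_correct, (ex_series_term_iterf N x Hx).
    exists (p (iterf N t x)). exact (Hp_series _ HN). }
  assert (Hsol : forall x, I x -> solves_at (fun y => Series (series_term y)) x).
  { intros x Hx. apply Series_term_solves; [exact Hx|].
    eexists. exact (Hcv _ (I_stable x Hx)). }
  exists (fun x => Series (series_term x)). split; [|split; [|split]].
  - intros x Hx. exact (is_series_unique _ _ (Hp_series x Hx)).
  - exact Hsol.
  - intros q' Hq'p Hq' x Hx. destruct (Henter x Hx) as [N HN].
    apply (solutions_agree_iterf q' _ N x Hq' Hsol Hx).
    rewrite Hq'p by exact HN. symmetry. exact (is_series_unique _ _ (Hp_series _ HN)).
  - exact Hcv.
Qed.

End FunctionalEquation.

Theorem proposition4
  (a : R) (tau1 tau2 d1 d2 t21 d21 : R -> R) (Dn : nat -> R -> R)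
  (ahat sigma : R) (p : R -> R)
  (Ha : 0 < a < 1)
  (Hmap1 : forall x, 0 <= x <= a -> 0 <= tau1 x <= 1)
  (Hmap2 : forall x, 0 <= x <= a -> 0 <= tau2 x <= 1)
  (HC1 : C1_on tau1 d1 0 a) (HC2 : C1_on tau2 d2 0 a)
  (Hinc1 : strictly_increasing_on tau1 0 a)
  (Hinc2 : strictly_increasing_on tau2 0 a)
  (H10 : tau1 0 = 0) (H1a : tau1 a = 1)
  (H20 : tau2 0 = 0) (H2a : tau2 a = 1)
  (Hle1 : forall x, 0 <= x <= a -> tau1 x <= x / a)
  (Hge2 : forall x, 0 <= x <= a -> tau2 x >= x / a)
  (H21map : forall x, 0 <= x <= a -> 0 <= t21 x <= a)
  (H21def : forall x, 0 <= x <= a -> tau2 (t21 x) = tau1 x)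
  (HC21 : C1_on t21 d21 0 a)
  (H21lt : forall x, 0 < x < a -> t21 x < x)
  (Hahat : 0 < ahat < a) (Hsigma : sigma < 1)
  (Hd21 : forall x, 0 <= x <= ahat -> d21 x <= sigma)
  (Hpbd : exists M, forall x, 0 <= x <= ahat -> Rabs (p x) <= M)
  (Hpeq : forall x, 0 <= x <= ahat ->
     p x = p (t21 x) * d21 x - (d21 x - a * d1 x))
  (HDn : forall n, has_derivative_on (iterf n t21) (Dn n) 0 a) :
  exists q : R -> R,
    (forall x, 0 <= x <= ahat -> q x = p x) /\
    (forall x, 0 <= x < a -> q x = q (t21 x) * d21 x - (d21 x - a * d1 x)) /\
    (forall q' : R -> R,
       (forall x, 0 <= x <= ahat -> q' x = p x) ->
       (forall x, 0 <= x < a -> q' x = q' (t21 x) * d21 x - (d21 x - a * d1 x)) ->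
       forall x, 0 <= x < a -> q' x = q x) /\
    (forall x, 0 <= x < a ->
       is_series (fun n => (a * d1 (iterf n t21 x) - d21 (iterf n t21 x)) * Dn n x)
                 (q x)).
Proof.
  destruct HC21 as [Hd21_deriv _]. destruct Hpbd as [M HM].
  assert (Ha0 : 0 < a) by lra.
  assert (Hinc : strictly_increasing_on t21 0 a)
    by exact (strictly_increasing_on_of_comp t21 tau1 tau2 0 a Hinc1 Hinc2 H21map H21def).
  assert (Ht0 : t21 0 = 0).
  { apply (strictly_increasing_on_inj tau2 0 a Hinc2); [apply H21map; lra|lra|].
    rewrite H21def, H10, H20 by lra. reflexivity. }
  assert (Hstable : forall x, 0 <= x < a -> 0 <= t21 x < a).
  { intros x Hx. pose proof (Hinc x a ltac:(lra) ltac:(lra) (proj2 Hx)).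
    pose proof (H21map x ltac:(lra)). pose proof (H21map a ltac:(lra)). lra. }
  assert (Hstable_hat : forall x, 0 <= x <= ahat -> 0 <= t21 x <= ahat).
  { intros x Hx. pose proof (H21map x ltac:(lra)).
    destruct (Req_dec x 0) as [->|Hx0]; [rewrite Ht0|pose proof (H21lt x ltac:(lra))]; lra. }
  assert (HD0 : forall x, 0 <= x < a -> Dn 0%nat x = 1)
    by (intros x Hx; apply (iter_derivative_0 0 a Ha0 t21 Dn); auto; lra).
  assert (HDS : forall n x, 0 <= x < a -> Dn (S n) x = Dn n (t21 x) * d21 x)
    by (intros n x Hx; apply (iter_derivative_S 0 a Ha0 t21 d21 Dn); auto; lra).
  assert (Hd21_abs : forall x, 0 <= x <= ahat -> Rabs (d21 x) <= sigma).
  { intros x Hx.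
    rewrite Rabs_pos_eq by (apply (has_derivative_on_nonneg 0 a Ha0 t21 d21); auto; lra).
    auto. }
  assert (Henter : forall x, 0 <= x < a -> exists N, 0 <= iterf N t21 x <= ahat).
  { intros x Hx. destruct (iterf_eventually_le t21 0 a ahat x) as [N HN]; try lra.
    - intros y Hy. apply H21lt. lra.
    - intros y Hy. apply (has_derivative_on_continuous 0 a t21 d21); auto; lra.
    - exists N. split; [apply (iterf_maps 0 a t21 H21map); lra|exact HN]. }
  assert (Hsolves : forall q x, solves_at t21 d21 (fun y => a * d1 y - d21 y) q x <->
                                q x = q (t21 x) * d21 x - (d21 x - a * d1 x))
    by (intros q x; unfold solves_at; split; intros E; rewrite E; ring).
  destruct (bounded_solution_extends (fun x => 0 <= x < a) t21 d21 (fun y => a * d1 y - d21 y)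
              Dn Hstable HD0 HDS (fun x => 0 <= x <= ahat) sigma M p)
    as [q [Hqp [Hqsol [Hquniq Hqseries]]]]; auto.
  - intros x Hx. lra.
  - intros x Hx. apply Hsolves, Hpeq, Hx.
  - exists q. repeat split.
    + exact Hqp.
    + intros x Hx. apply Hsolves, Hqsol, Hx.
    + intros q' Hq'p Hq'. apply Hquniq; [exact Hq'p|]. intros x Hx. apply Hsolves, Hq', Hx.
    + exact Hqseries.
Qed.
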